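(* Let $d\ge1$, let $P\subseteq[-1,1]^d$ be a convex $d$-dimensional polytope containing the origin, let $\alpha\le 1$ be a constant, and let $\mathcal{A}$ be an algorithm such that for every $\vec{w}\in\mathbb{R}^d$, $\mathcal{A}(\vec{w})\in P$ and $\mathcal{A}(\vec{w})\cdot\vec{w}\ge\alpha\cdot\max_{\vec{x}\in P}\vec{x}\cdot\vec{w}$. Let $P_1=\{\vec{\pi} : \vec{\pi}\cdot\vec{w}\le\mathcal{A}(\vec{w})\cdot\vec{w}\ \forall\vec{w}\in[-1,1]^d\}$, and let $WSO$ be the weird separation oracle defined (with arbitrary parameters $N\in\mathbb{N}$, $\delta>0$) as in the context. Consider an execution of the ellipsoid algorithm using $WSO$ (possibly together with additional variables and constraints), and let $Q$ be the polytope defined by the intersection of the halfspaces output by $WSO$ during this execution. Then during the entire execution, $P_1\subseteq Q$.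
   Context: ''Running the ellipsoid algorithm with a weird separation oracle'' (an algorithm which on input $\vec{x}$ outputs either ''yes'' or a hyperplane violated by $\vec{x}$, the set of accepted points not necessarily being convex) means: start from a suitable initial ellipsoid; query the oracle on the center of the current ellipsoid; if accepted, output it as a feasible point; otherwise update the ellipsoid using the returned violated hyperplane as in the standard ellipsoid algorithm; repeat for a predetermined number $N$ of iterations, and if no feasible point is found, output ''infeasible''. The oracle $WSO$, on input $\vec{\pi}\in\mathbb{R}^d$, runs the ellipsoid algorithm for $N$ iterations on the following problem in the variables $(\vec{w},t)$: constraints $\vec{w}\in[-1,1]^d$; $t-\vec{\pi}\cdot\vec{w}\le-\delta$; and the weird oracle $\widehat{WSO}(\vec{w},t)$, which answers ''yes'' if $t\ge\mathcal{A}(\vec{w})\cdot\vec{w}$ and otherwise outputs the violated hyperplane $t'\ge\mathcal{A}(\vec{w})\cdot\vec{w}'$ (in the variables $(\vec{w}',t')$). If this inner ellipsoid run outputs ''infeasible'', $WSO(\vec{\pi})=$''yes''; if it finds a feasible point $(t^*,\vec{w}^* )$, $WSO$ outputs the violated hyperplane $\vec{w}^*\cdot\vec{\pi}'\le t^*$ (in the variable $\vec{\pi}'$). *)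

From mathcomp Require Import all_boot all_order all_algebra.
Set Implicit Arguments.
Unset Strict Implicit.
Unset Printing Implicit Defensive.
Import Order.TTheory GRing.Theory Num.Theory.
Local Open Scope ring_scope.

Section Defs.
Variable R : rcfType.

Definition dotv n (u v : 'cV[R]_n) : R := \sum_(i < n) u i 0 * v i 0.

Definition in_box n (x : 'cV[R]_n) : Prop := forall i, `|x i 0| <= 1.

(* A polytope: a bounded set cut out by finitely many linear inequalities
   (boundedness will be imposed separately by P ⊆ [-1,1]^d). *)
Definition is_polyhedron n (P : 'cV[R]_n -> Prop) : Prop :=
  exists m (M : 'M[R]_(m, n)) (b : 'cV[R]_m),
    forall x, P x <-> (forall i, (M *m x) i 0 <= b i 0).

Definition convex_set n (P : 'cV[R]_n -> Prop) : Prop :=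
  forall x y (l : R), P x -> P y -> 0 <= l -> l <= 1 -> P (l *: x + (1 - l) *: y).

Definition full_dimensional n (P : 'cV[R]_n -> Prop) : Prop :=
  exists (x : 'cV[R]_n) (e : R), 0 < e /\
    forall y : 'cV[R]_n, (forall i, `|y i 0 - x i 0| < e) -> P y.

(* An oracle answers None ("yes") or Some (a, b),
   meaning the hyperplane/halfspace  a . x <= b  violated by the query. *)
Definition oracle n := 'cV[R]_n -> option ('cV[R]_n * R).

(* Ellipsoid E(c, B) = { x | (x - c)^T B^-1 (x - c) <= 1 }; standard
   central-cut update with cut direction a. *)
Definition ell_update n (c : 'cV[R]_n) (B : 'M[R]_n) (a : 'cV[R]_n)
  : 'cV[R]_n * 'M[R]_n :=
  let Ba := B *m a in
  let q := (a^T *m Ba) 0 0 in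
  let c' := c - ((n.+1%:R)^-1 / Num.sqrt q) *: Ba in
  let B' := ((n%:R ^+ 2) / (n%:R ^+ 2 - 1)) *:
              (B - (2 / (n.+1%:R) / q) *: (Ba *m Ba^T)) in
  (c', B').

Fixpoint ellipsoid_run n (O : oracle n) (N : nat) (c : 'cV[R]_n) (B : 'M[R]_n)
  : option 'cV[R]_n :=
  match N with
  | 0 => None
  | N'.+1 =>
    match O c with
    | None => Some c
    | Some (a, _) =>
        let cB := ell_update c B a in ellipsoid_run O N' cB.1 cB.2
    end
  end.

Definition w_of d (z : 'cV[R]_(d + 1)) : 'cV[R]_d := usubmx z.
Definition t_of d (z : 'cV[R]_(d + 1)) : R := dsubmx z 0 0.
(* Halfspace  a . w + b . t <= c  as a pair (vector in R^(d+1), rhs). *)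
Definition hs d (a : 'cV[R]_d) (b : R) : 'cV[R]_(d + 1) := col_mx a b%:M.

Definition unit_vec d (i : 'I_d) : 'cV[R]_d := \col_j (i == j)%:R.

(* Separation oracle of the inner problem: constraints w in [-1,1]^d,
   t - pi . w <= -delta, and the weird oracle  t >= A(w) . w. *)
Definition inner_oracle d (A : 'cV[R]_d -> 'cV[R]_d) (pi : 'cV[R]_d) (delta : R)
  : oracle (d + 1) := fun z =>
  let w := w_of z in let t := t_of z in
  match [pick i | 1 < w i 0] with
  | Some i => Some (hs (unit_vec i) 0, 1)
  | None =>
  match [pick i | w i 0 < -1] with
  | Some i => Some (hs (- unit_vec i) 0, 1)
  | None =>
  if -delta < t - dotv pi w then Some (hs (- pi) 1, - delta)
  else if t < dotv (A w) w then Some (hs (A w) (-1), 0)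
  else None
  end end.

(* WSO(pi): None = "yes"; Some (ws, ts) = violated halfspace  ws . pi' <= ts. *)
Definition WSO d (A : 'cV[R]_d -> 'cV[R]_d) (N : nat) (delta : R)
  (c0 : 'cV[R]_(d + 1)) (B0 : 'M[R]_(d + 1)) (pi : 'cV[R]_d)
  : option ('cV[R]_d * R) :=
  match ellipsoid_run (inner_oracle A pi delta) N c0 B0 with
  | None => None
  | Some z => Some (w_of z, t_of z)
  end.

Definition P1 d (A : 'cV[R]_d -> 'cV[R]_d) (pi : 'cV[R]_d) : Prop :=
  forall w, in_box w -> dotv pi w <= dotv (A w) w.

Definition Qset d (WSOf : 'cV[R]_d -> option ('cV[R]_d * R))
  (qs : seq 'cV[R]_d) (pi : 'cV[R]_d) : Prop :=
  forall q w t, q \in qs -> WSOf q = Some (w, t) -> dotv w pi <= t.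

End Defs.

(* A halfspace w . pi' <= t is only output by WSO when the inner ellipsoid run
   stops at a point (w, t) accepted by every constraint of the inner problem;
   in particular w lies in the cube and t >= A(w) . w.  Any pi in P_1 then
   satisfies w . pi <= A(w) . w <= t, so it lies in every such halfspace;
   no property of P or of the approximation ratio of A is needed. *)
From mathcomp Require Import all_boot all_order all_algebra.
Import Order.TTheory GRing.Theory Num.Theory.
Local Open Scope ring_scope.

Section InnerProblem.
Variable R : rcfType.

Lemma dotvC n (u v : 'cV[R]_n) : dotv u v = dotv v u.
Proof. by apply: eq_bigr => i _; rewrite mulrC. Qed.

Lemma ellipsoid_run_accepted {n} {O : oracle R n} {N c B z} :
  ellipsoid_run O N c B = Some z -> O z = None.
Proof.
elim: N c B => [|N IH] c B //=.
case Oc: (O c) => [[a b]|]; first exact: IH.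
by case=> <-.
Qed.

Lemma inner_oracle_accepted d (A : 'cV[R]_d -> 'cV[R]_d) pi delta z :
  inner_oracle A pi delta z = None ->
  in_box (w_of z) /\ dotv (A (w_of z)) (w_of z) <= t_of z.
Proof.
rewrite /inner_oracle.
case: pickP => [//|w_le1]; case: pickP => [//|w_geN1].
case: ifP => // _; case: ifP => // /negbT; rewrite -leNgt => t_ge _.
split=> // i; rewrite ler_norml.
by move: (w_geN1 i) (w_le1 i) => /negbT; rewrite -leNgt => -> /negbT; rewrite -leNgt.
Qed.

Lemma WSO_cut_accepted d (A : 'cV[R]_d -> 'cV[R]_d) N delta c0 B0 pi w t :
  WSO A N delta c0 B0 pi = Some (w, t) -> in_box w /\ dotv (A w) w <= t.
Proof.
rewrite /WSO; case E: ellipsoid_run => [z|] // [<- <-].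
exact: inner_oracle_accepted (ellipsoid_run_accepted E).
Qed.

End InnerProblem.

Theorem fact1 (R : rcfType) (d : nat) (hd : (1 <= d)%N)
  (P : 'cV[R]_d -> Prop)
  (hPpoly : is_polyhedron P) (hPconv : convex_set P)
  (hPdim : full_dimensional P)
  (hPbox : forall x, P x -> in_box x) (hP0 : P 0)
  (alpha : R) (halpha : alpha <= 1)
  (A : 'cV[R]_d -> 'cV[R]_d)
  (hAin : forall w, P (A w))
  (hAapx : forall w x, P x -> (forall y, P y -> dotv y w <= dotv x w) ->
             alpha * dotv x w <= dotv (A w) w)
  (N : nat) (delta : R) (hdelta : 0 < delta)
  (c0 : 'cV[R]_(d + 1)) (B0 : 'M[R]_(d + 1))
  (queries : seq 'cV[R]_d) :
  forall pi, P1 A pi -> Qset (WSO A N delta c0 B0) queries pi.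
Proof.
move=> pi pi_P1 q w t _ /WSO_cut_accepted [w_box At_le].
by rewrite dotvC; apply: le_trans (pi_P1 w w_box) At_le.
Qed.
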